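(* Let $F\in\mathrm{GL}^+(2)$ have singular values $\lambda_1=\lambda_2=c$, and let $H\in\mathbb{R}^{2\times2}$. Define $\lambda_{\max}(t)=\lambda_{\max}(F+tH)$ and $\lambda_{\min}(t)=\lambda_{\min}(F+tH)$, the larger and smaller singular values of $F+tH$. Then the mappings $t\mapsto\lambda_{\max}(t)$ and $t\mapsto\lambda_{\min}(t)$ are both left-differentiable and right-differentiable in a neighbourhood of $t=0$, and $$\partial^-\lambda_{\max}(0)=\partial^+\lambda_{\min}(0)\leq\partial^-\lambda_{\min}(0)=\partial^+\lambda_{\max}(0).$$
   Context: $\mathrm{GL}^+(2)$ is the group of real invertible $2\times2$ matrices with positive determinant. For a real function $f$, the one-sided derivatives are $\partial^-f(t)=\lim_{h\uparrow0}\frac{f(t+h)-f(t)}{h}$ and $\partial^+f(t)=\lim_{h\downarrow0}\frac{f(t+h)-f(t)}{h}$. *)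

From HB Require Import structures.
From mathcomp Require Import all_boot all_order all_algebra.
From mathcomp Require Import all_classical all_reals all_analysis.
Set Implicit Arguments. Unset Strict Implicit. Unset Printing Implicit Defensive.
Import Order.TTheory GRing.Theory Num.Theory.
Import numFieldNormedType.Exports.
Local Open Scope ring_scope.
Local Open Scope classical_set_scope.

(* For a 2x2
   matrix C the eigenvalues are the roots of x^2 - tr(C) x + det(C), i.e.
   (tr C +- sqrt(tr(C)^2 - 4 det C)) / 2. *)
Section SV.
Variable R : realType.

Definition gram (F : 'M[R]_2) : 'M[R]_2 := F^T *m F.

Definition eig_max_sym2 (C : 'M[R]_2) : R :=
  (\tr C + Num.sqrt (\tr C ^+ 2 - 4%:R * \det C)) / 2%:R.
Definition eig_min_sym2 (C : 'M[R]_2) : R :=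
  (\tr C - Num.sqrt (\tr C ^+ 2 - 4%:R * \det C)) / 2%:R.

Definition sv_max (F : 'M[R]_2) : R := Num.sqrt (eig_max_sym2 (gram F)).
Definition sv_min (F : 'M[R]_2) : R := Num.sqrt (eig_min_sym2 (gram F)).

Definition left_deriv (f : R -> R) (t d : R) : Prop :=
  (fun h : R => (f (t + h) - f t) / h) @ 0^'- --> d.
Definition right_deriv (f : R -> R) (t d : R) : Prop :=
  (fun h : R => (f (t + h) - f t) / h) @ 0^'+ --> d.

Definition left_differentiable (f : R -> R) (t : R) : Prop :=
  exists d, left_deriv f t d.
Definition right_differentiable (f : R -> R) (t : R) : Prop :=
  exists d, right_deriv f t d.
End SV.

(* For a 2x2 matrix G let P = sqnorm_conf G and Q = sqnorm_anticonf G.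
   Then P - Q = 4 det G and the singular values of G are
   (sqrt P +- sqrt Q) / 2 whenever det G >= 0. Equal singular values and
   det F > 0 force Q(F) = 0, so along the line F + tH we get Q = t^2 Q(H), and
   on the neighbourhood of 0 where det (F + tH) > 0
     lmax t = p t / 2 + k |t| / 2,   lmin t = p t / 2 - k |t| / 2,
   with p t = sqrt P(F + tH) differentiable (P > Q >= 0 there) and
   k = sqrt Q(H) >= 0. The one-sided derivatives of |t| at 0 are -1 and +1,
   which gives the claimed (in)equalities. *)

From HB Require Import structures.
From mathcomp Require Import all_boot all_order all_algebra.
From mathcomp Require Import all_classical all_reals all_analysis.
From mathcomp Require Import ring lra.
Import Order.TTheory GRing.Theory Num.Theory.
Import numFieldNormedType.Exports.
Local Open Scope ring_scope.

Section Matrix22.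
Context {K : comNzRingType}.
Implicit Types G : 'M[K]_2.

Lemma det_mx22 G : \det G = G 0 0 * G 1 1 - G 0 1 * G 1 0.
Proof.
rewrite (expand_det_row _ 0) !big_ord_recl big_ord0 /cofactor !det_mx11 !mxE /=.
have -> : lift (0 : 'I_2) (0 : 'I_1) = 1 by exact/val_inj.
have -> : lift (1 : 'I_2) (0 : 'I_1) = 0 by exact/val_inj.
by rewrite /bump /= expr0 expr1 !mul1r addr0 mulN1r mulrN.
Qed.

Lemma tr_mx22 G : \tr G = G 0 0 + G 1 1.
Proof.
rewrite /mxtrace !big_ord_recl big_ord0 /=.
have -> : lift (0 : 'I_2) (0 : 'I_1) = 1 by exact/val_inj.
by rewrite addr0.
Qed.

(* Twice the squared Frobenius norms of the conformal part
   (G + cof G) / 2 and of the anticonformal part (G - cof G) / 2 of G. *)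
Definition sqnorm_conf G := (G 0 0 + G 1 1) ^+ 2 + (G 1 0 - G 0 1) ^+ 2.
Definition sqnorm_anticonf G := (G 0 0 - G 1 1) ^+ 2 + (G 0 1 + G 1 0) ^+ 2.

Lemma sqnorm_conf_sub_anticonf G :
  sqnorm_conf G - sqnorm_anticonf G = 4%:R * \det G.
Proof. by rewrite det_mx22 /sqnorm_conf /sqnorm_anticonf; ring. Qed.

Lemma tr_gram_mx22 G :
  2%:R * \tr (G^T *m G) = sqnorm_conf G + sqnorm_anticonf G.
Proof.
rewrite tr_mx22 !mxE !big_ord_recl !big_ord0 !mxE /=.
have -> : lift (0 : 'I_2) (0 : 'I_1) = 1 by exact/val_inj.
by rewrite /sqnorm_conf /sqnorm_anticonf; ring.
Qed.

End Matrix22.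

Lemma sqnorm_conf_map (K L : comNzRingType) (f : {rmorphism K -> L})
    (G : 'M[K]_2) :
  sqnorm_conf (map_mx f G) = f (sqnorm_conf G).
Proof. by rewrite /sqnorm_conf !mxE !(rmorphD, rmorphN, rmorphXn). Qed.

Section SingularValues.
Context {R : realType}.
Implicit Types G : 'M[R]_2.

Lemma sqnorm_conf_ge0 G : 0 <= sqnorm_conf G.
Proof. by rewrite addr_ge0 ?sqr_ge0. Qed.

Lemma sqnorm_anticonf_ge0 G : 0 <= sqnorm_anticonf G.
Proof. by rewrite addr_ge0 ?sqr_ge0. Qed.

Lemma eig_sym2_gram G (p := Num.sqrt (sqnorm_conf G))
    (q := Num.sqrt (sqnorm_anticonf G)) :
  eig_max_sym2 (gram G) = ((p + q) / 2) ^+ 2 /\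
  eig_min_sym2 (gram G) = ((p - q) / 2) ^+ 2.
Proof.
have p0 : 0 <= p by exact: sqrtr_ge0.
have q0 : 0 <= q by exact: sqrtr_ge0.
have tr_gram : \tr (gram G) = (p ^+ 2 + q ^+ 2) / 2.
  rewrite !sqr_sqrtr ?sqnorm_conf_ge0 ?sqnorm_anticonf_ge0 // -tr_gram_mx22.
  by field.
have det_gram : \det (gram G) = ((p ^+ 2 - q ^+ 2) / 4%:R) ^+ 2.
  rewrite /gram det_mulmx det_tr -expr2.
  rewrite !sqr_sqrtr ?sqnorm_conf_ge0 ?sqnorm_anticonf_ge0 //.
  by rewrite sqnorm_conf_sub_anticonf; field.
have discr : \tr (gram G) ^+ 2 - 4%:R * \det (gram G) = (p * q) ^+ 2.
  by rewrite tr_gram det_gram; field.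
rewrite /eig_max_sym2 /eig_min_sym2 discr sqrtr_sqr ger0_norm ?mulr_ge0 //.
by rewrite tr_gram; split; field.
Qed.

Lemma sv_maxE G :
  sv_max G = (Num.sqrt (sqnorm_conf G) + Num.sqrt (sqnorm_anticonf G)) / 2.
Proof.
by rewrite /sv_max (eig_sym2_gram G).1 sqrtr_sqr ger0_norm.
Qed.

Lemma sv_minE G : 0 <= \det G ->
  sv_min G = (Num.sqrt (sqnorm_conf G) - Num.sqrt (sqnorm_anticonf G)) / 2.
Proof.
move=> detG; rewrite /sv_min (eig_sym2_gram G).2 sqrtr_sqr ger0_norm //.
rewrite divr_ge0 // subr_ge0 ler_sqrt ?sqnorm_conf_ge0 // -subr_ge0.
by rewrite sqnorm_conf_sub_anticonf mulr_ge0.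
Qed.

Lemma sqnorm_anticonf_eq0 G :
  0 < \det G -> sv_max G = sv_min G -> sqnorm_anticonf G = 0.
Proof.
move=> detG; rewrite sv_maxE sv_minE ?ltW // => sv_eq.
have q0 : Num.sqrt (sqnorm_anticonf G) = 0 by lra.
by rewrite -[LHS]sqr_sqrtr ?sqnorm_anticonf_ge0 // q0 expr0n.
Qed.

End SingularValues.

Section OneSidedDerivatives.
Context {R : realType}.
Local Open Scope classical_set_scope.
Implicit Types (f g l : R -> R) (t a b alpha beta : R).

Definition diff_quot f t h := (f (t + h) - f t) / h.

Lemma cvg_diff_quot_derivable f t : derivable f t 1 ->
  diff_quot f t @ 0^' --> 'D_1 f t.
Proof.
suff -> : diff_quot f t = fun h => h^-1 *: ((f \o shift t) (h *: 1) - f t).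
  by [].
apply/funext => h; rewrite /diff_quot /= -[h%:A]/(h * 1) mulr1 [h + t]addrC.
exact: mulrC.
Qed.

Lemma left_deriv_derivable f t : derivable f t 1 -> left_deriv f t ('D_1 f t).
Proof.
move=> /cvg_diff_quot_derivable; apply: cvg_trans; apply: cvg_app.
by apply: within_subset => h; exact: ltr0_neq0.
Qed.

Lemma right_deriv_derivable f t : derivable f t 1 -> right_deriv f t ('D_1 f t).
Proof.
move=> /cvg_diff_quot_derivable; apply: cvg_trans; apply: cvg_app.
by apply: within_subset => h; exact: lt0r_neq0.
Qed.

Lemma cvg_diff_quot_lincomb (G : set_system R) {FG : Filter G} l f g t a b
    alpha beta :
  G `=>` nbhs 0 -> (\forall s \near t, l s = alpha * f s + beta * g s) ->
  diff_quot f t @ G --> a -> diff_quot g t @ G --> b ->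
  diff_quot l t @ G --> alpha * a + beta * b.
Proof.
move=> G0 lE fa gb.
have lt : l t = alpha * f t + beta * g t := nbhs_singleton lE.
pose lin h := alpha * diff_quot f t h + beta * diff_quot g t h.
apply: (@cvg_trans _ (lin @ G)); last first.
  exact: cvgD (cvgM (cvg_cst _) fa) (cvgM (cvg_cst _) gb).
apply: near_eq_cvg; move/nbhs0P/G0 : lE; apply: filterS => h lE.
by rewrite /lin /diff_quot lE lt; ring.
Qed.

Lemma left_deriv_lincomb l f g t a b alpha beta :
  (\forall s \near t, l s = alpha * f s + beta * g s) ->
  left_deriv f t a -> left_deriv g t b ->
  left_deriv l t (alpha * a + beta * b).
Proof. exact: cvg_diff_quot_lincomb (cvg_within _). Qed.

Lemma right_deriv_lincomb l f g t a b alpha beta :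
  (\forall s \near t, l s = alpha * f s + beta * g s) ->
  right_deriv f t a -> right_deriv g t b ->
  right_deriv l t (alpha * a + beta * b).
Proof. exact: cvg_diff_quot_lincomb (cvg_within _). Qed.

Lemma left_deriv_normr t : left_deriv Num.norm t (if 0 < t then 1 else -1).
Proof.
apply: cvg_near_cst; case: ltP => t0; near=> h;
  have h0 : h < 0 by near: h; exact: nbhs_left_lt.
  have th : 0 < t + h.
    rewrite -ltrBlDl sub0r; near: h; apply: nbhs_left_gt; by rewrite oppr_lt0.
  by rewrite !gtr0_norm // addrAC subrr add0r divff ?ltr0_neq0.
have th : t + h <= 0 by lra.
by rewrite !ler0_norm // opprD addrAC subrr add0r mulNr divff ?ltr0_neq0.
Unshelve. all: by end_near.
Qed.

Lemma right_deriv_normr t : right_deriv Num.norm t (if 0 <= t then 1 else -1).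
Proof.
apply: cvg_near_cst; case: leP => t0; near=> h;
  have h0 : 0 < h by near: h; exact: nbhs_right_gt.
  have th : 0 <= t + h by lra.
  by rewrite !ger0_norm // addrAC subrr add0r divff ?lt0r_neq0.
have th : t + h < 0.
  rewrite -ltrBrDl sub0r; near: h; apply: nbhs_right_lt; by rewrite oppr_gt0.
by rewrite !ltr0_norm // opprD addrAC subrr add0r mulNr divff ?lt0r_neq0.
Unshelve. all: by end_near.
Qed.

End OneSidedDerivatives.

Section ConformalLine.
Context {R : realType} {F H : 'M[R]_2}.
Local Open Scope classical_set_scope.

Definition line_poly : 'M[{poly R}]_2 := map_mx polyC F + 'X *: map_mx polyC H.

Lemma map_line_poly s : map_mx (horner_eval s) line_poly = F + s *: H.
Proof. by apply/matrixP => i j; rewrite !mxE /= horner_evalE !hornerE. Qed.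

Lemma sqnorm_conf_line s :
  sqnorm_conf (F + s *: H) = (sqnorm_conf line_poly).[s].
Proof. by rewrite -map_line_poly sqnorm_conf_map. Qed.

Lemma det_line s : \det (F + s *: H) = (\det line_poly).[s].
Proof. by rewrite -map_line_poly det_map_mx. Qed.

Lemma near_det_line_gt0 t :
  0 < \det (F + t *: H) -> \forall s \near t, 0 < \det (F + s *: H).
Proof.
move=> det_t; have /cvgr_gt near_gt := @continuous_horner _ (\det line_poly) t.
apply: filterS (near_gt 0 _) => [s|]; first by rewrite det_line.
by rewrite -det_line.
Qed.

Hypothesis F_conformal : sqnorm_anticonf F = 0.

Let k := Num.sqrt (sqnorm_anticonf H).
Let p s := Num.sqrt (sqnorm_conf (F + s *: H)).

Lemma sqnorm_anticonf_line s :
  sqnorm_anticonf (F + s *: H) = s ^+ 2 * sqnorm_anticonf H.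
Proof.
move: F_conformal => /eqP; rewrite paddr_eq0 ?sqr_ge0 // !sqrf_eq0.
move=> /andP[/eqP/subr0_eq F11 /eqP/addr0_eq F10].
by rewrite /sqnorm_anticonf !mxE F11 -F10; ring.
Qed.

Lemma sv_max_line s : sv_max (F + s *: H) = 2^-1 * p s + k / 2 * `|s|.
Proof.
rewrite sv_maxE sqnorm_anticonf_line sqrtrM ?sqr_ge0 // sqrtr_sqr.
by rewrite /p /k; field.
Qed.

Lemma sv_min_line s : 0 <= \det (F + s *: H) ->
  sv_min (F + s *: H) = 2^-1 * p s + - (k / 2) * `|s|.
Proof.
move=> det_s; rewrite sv_minE // sqnorm_anticonf_line sqrtrM ?sqr_ge0 //.
by rewrite sqrtr_sqr /p /k; field.
Qed.

Lemma derivable_sqrt_conf_line t : 0 < \det (F + t *: H) -> derivable p t 1.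
Proof.
move=> det_t; have := sqnorm_conf_sub_anticonf (F + t *: H).
have := sqnorm_anticonf_ge0 (F + t *: H); rewrite sqnorm_conf_line => ? ?.
have conf_t : 0 < (sqnorm_conf line_poly).[t] by lra.
have -> : p = Num.sqrt \o horner (sqnorm_conf line_poly).
  by apply/funext => s; rewrite /p /= sqnorm_conf_line.
apply: ex_derive; apply: is_derive1_comp; exact: is_derive1_sqrt.
Qed.

Lemma left_deriv_sv_line t (sgn := if 0 < t then 1 else -1) :
  0 < \det (F + t *: H) ->
  left_deriv (fun s => sv_max (F + s *: H)) t
    (2^-1 * 'D_1 p t + k / 2 * sgn) /\
  left_deriv (fun s => sv_min (F + s *: H)) t
    (2^-1 * 'D_1 p t + - (k / 2) * sgn).
Proof.
move=> det_t.
have /left_deriv_derivable dp := derivable_sqrt_conf_line t det_t.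
split; apply: left_deriv_lincomb dp (left_deriv_normr t).
  by near=> s; rewrite sv_max_line.
near=> s; rewrite sv_min_line //; apply: ltW.
by near: s; exact: near_det_line_gt0.
Unshelve. all: by end_near.
Qed.

Lemma right_deriv_sv_line t (sgn := if 0 <= t then 1 else -1) :
  0 < \det (F + t *: H) ->
  right_deriv (fun s => sv_max (F + s *: H)) t
    (2^-1 * 'D_1 p t + k / 2 * sgn) /\
  right_deriv (fun s => sv_min (F + s *: H)) t
    (2^-1 * 'D_1 p t + - (k / 2) * sgn).
Proof.
move=> det_t.
have /right_deriv_derivable dp := derivable_sqrt_conf_line t det_t.
split; apply: right_deriv_lincomb dp (right_deriv_normr t).
  by near=> s; rewrite sv_max_line.
near=> s; rewrite sv_min_line //; apply: ltW.
by near: s; exact: near_det_line_gt0.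
Unshelve. all: by end_near.
Qed.

End ConformalLine.

Theorem lemma3p8 (R : realType) (F H : 'M[R]_2) (c : R) :
  0 < \det F ->
  sv_max F = c -> sv_min F = c ->
  let lmax := fun t : R => sv_max (F + t *: H) in
  let lmin := fun t : R => sv_min (F + t *: H) in
  (exists2 e : R, 0 < e & forall t : R, `|t| < e ->
     [/\ left_differentiable lmax t, right_differentiable lmax t,
         left_differentiable lmin t & right_differentiable lmin t]) /\
  (exists dmaxL dmaxR dminL dminR : R,
     [/\ left_deriv lmax 0 dmaxL, right_deriv lmax 0 dmaxR,
         left_deriv lmin 0 dminL, right_deriv lmin 0 dminR &
         [/\ dmaxL = dminR, dminR <= dminL & dminL = dmaxR]]).
Proof.
move=> detF svmaxF svminF lmax lmin.
have F_conf := sqnorm_anticonf_eq0 F detF (etrans svmaxF (esym svminF)).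
have det0 : 0 < \det (F + 0 *: H) by rewrite scale0r addr0.
have [e e0 det_pos] :
    exists2 e, 0 < e & forall t, `|t| < e -> 0 < \det (F + t *: H).
  have /nbhs_ballP[e e0 sub] := near_det_line_gt0 0 det0.
  by exists e => // t te; apply: sub; rewrite /ball /= sub0r normrN.
split.
  exists e => // t /det_pos det_t.
  have [maxL minL] := left_deriv_sv_line F_conf t det_t.
  have [maxR minR] := right_deriv_sv_line F_conf t det_t.
  by split; eexists; [exact: maxL | exact: maxR | exact: minL | exact: minR].
have [] := left_deriv_sv_line F_conf 0 det0.
have [] := right_deriv_sv_line F_conf 0 det0.
rewrite ltxx lexx => maxR minR maxL minL.
do 4 eexists; split; [exact: maxL | exact: maxR | exact: minL | exact: minR |].
have k0 := sqrtr_ge0 (sqnorm_anticonf H).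
by split; [ring | lra | ring].
Qed.
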